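(* Let $U$ be a general quantum walk on a finite graph $G=(V,E)$ with auxiliary space of dimension $d$, such that for every basis state $|a,v\rangle$ the limiting distribution $\pi(\cdot|a,v)$ equals a fixed distribution $\pi$ (necessarily uniform). Let $\epsilon>0$ with $M=M_\epsilon<\infty$. An amplification step from vertex $v$ consists of: choosing $a\in\{1,\dots,d\}$ uniformly at random and $t\in\{0,\dots,M-1\}$ uniformly at random, preparing $|a,v\rangle$, applying $U^t$, and measuring the vertex. Starting from an arbitrary vertex $v_0$ and performing $k\ge1$ successive amplification steps (each starting from the vertex measured at the end of the previous one), the distribution $D_k$ of the final measured vertex satisfies $\|D_k-\pi\|\le\epsilon^k$.
   Context: $\mathcal H=\mathcal H_A\otimes\mathcal H_V$ with basis $|a,v\rangle$. A general quantum walk on $G$ is a unitary $U$ with $U|a,v\rangle$ supported on $|a',v'\rangle$ with $v'=v$ or $v'$ adjacent to $v$. $P_t(\cdot|a,v)$ is the vertex distribution of $U^t|a,v\rangle$, $\bar P_T=\frac1T\sum_{t=0}^{T-1}P_t$, $\pi(\cdot|a,v)=\lim_T\bar P_T(\cdot|a,v)$. Total variation $\|d_1-d_2\|=\sum_v|d_1(v)-d_2(v)|$. Mixing time $M_\epsilon=\min\{T\ge1:\forall t\ge T,\forall|a,v\rangle:\ \|\pi(\cdot|a,v)-\bar P_t(\cdot|a,v)\|\le\epsilon\}$. *)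

From HB Require Import structures.
From mathcomp Require Import all_boot all_order all_algebra.
From mathcomp Require Import all_classical all_reals all_analysis.
From mathcomp Require Import complex.
Set Implicit Arguments. Unset Strict Implicit. Unset Printing Implicit Defensive.
Import Order.TTheory GRing.Theory Num.Theory.
Local Open Scope ring_scope.

Section QW.
Variables (R : realType) (d n : nat).
Local Notation C := (complex R).

(* Hilbert space H_A (x) H_V with H_A = C^d, H_V = C^n (vertices 'I_n).
   The basis vector |a,v> is the coordinate with index mxvec_index a v.
   A linear operator is a square matrix whose column (a,v) is U|a,v>,
   i.e. entry (i, j) is <i|U|j>. *)
Definition qidx (a : 'I_d) (v : 'I_n) : 'I_(d * n) := mxvec_index a v.

Definition simple_graph (e : rel 'I_n) : Prop :=
  (forall u v, e u v = e v u) /\ (forall v, ~~ e v v).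

Definition general_quantum_walk (e : rel 'I_n) (U : 'M[C]_(d * n)) : Prop :=
  U \is unitarymx /\
  forall a v a' v', U (qidx a' v') (qidx a v) != 0 -> (v' == v) || e v v'.

Definition Upow (U : 'M[C]_(d * n)) (t : nat) : 'M[C]_(d * n) :=
  iter t (mulmx U) 1%:M.

Definition sqmod (z : C) : R := (complex.Re z) ^+ 2 + (complex.Im z) ^+ 2.

Definition Pt (U : 'M[C]_(d * n)) (t : nat) (a : 'I_d) (v w : 'I_n) : R :=
  \sum_(a' < d) sqmod (Upow U t (qidx a' w) (qidx a v)).

Definition Pbar (U : 'M[C]_(d * n)) (T : nat) (a : 'I_d) (v w : 'I_n) : R :=
  T%:R^-1 * \sum_(t < T) Pt U t a v w.

(* total variation (sum of absolute differences, as in the paper) *)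
Definition tvd (D1 D2 : 'I_n -> R) : R := \sum_(w < n) `|D1 w - D2 w|.

Definition mixed_from (U : 'M[C]_(d * n)) (pi : 'I_n -> R) (eps : R) (T : nat) : Prop :=
  forall t, (T <= t)%N -> forall a v, tvd pi (Pbar U t a v) <= eps.

(* M is the mixing time M_eps (the minimum, which exists, i.e. M_eps < oo) *)
Definition is_mixing_time (U : 'M[C]_(d * n)) (pi : 'I_n -> R) (eps : R) (M : nat) : Prop :=
  (1 <= M)%N /\ mixed_from U pi eps M /\
  (forall T, (1 <= T)%N -> mixed_from U pi eps T -> (M <= T)%N).

Definition amp_step (U : 'M[C]_(d * n)) (M : nat) (v w : 'I_n) : R :=
  \sum_(a < d) \sum_(t < M) (d%:R^-1 * M%:R^-1 * Pt U t a v w).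

Fixpoint amp_dist (U : 'M[C]_(d * n)) (M : nat) (v0 : 'I_n) (k : nat) : 'I_n -> R :=
  match k with
  | 0 => fun w => if w == v0 then 1 else 0
  | k'.+1 => fun w => \sum_(u < n) amp_dist U M v0 k' u * amp_step U M u w
  end.

End QW.

From HB Require Import structures.
From mathcomp Require Import all_boot all_order all_algebra.
From mathcomp Require Import all_classical all_reals all_analysis.
From mathcomp Require Import complex.
Import Order.TTheory GRing.Theory Num.Theory.
Import numFieldNormedType.Exports.
Local Open Scope classical_set_scope.
Local Open Scope ring_scope.
Set Implicit Arguments. Unset Strict Implicit. Unset Printing Implicit Defensive.

(* Unitarity makes every P_t(.|a,v) a probability distribution and makes the
   sum over all basis states of P_t(w|.) equal to d; passing to the Cesaro
   limit forces d n pi(w) = d, so pi is uniform.  One amplification step is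
   then a doubly stochastic kernel K whose rows are averages of the
   distributions Pbar_M(.|a,u), hence eps-close to pi, and pi is stationary
   for K.  For any distribution mu, mu K - pi = (mu - pi) K = sum_u
   (mu u - pi u) (K u - pi), so each step contracts the distance to pi by a
   factor eps. *)

Section SquaredModulus.
Variable R : realType.
Local Notation C := (complex R).

Lemma sqmodE (z : C) : (sqmod z)%:C%C = z * z^*.
Proof. by rewrite /sqmod add_Re2_Im2 normCK. Qed.

Lemma sqmod_conj (z : C) : sqmod z^* = sqmod z.
Proof. by apply: (@complexI R); rewrite !sqmodE conjCK mulrC. Qed.

Lemma unitarymx_row_sqmod m (A : 'M[C]_m) i :
  A \is unitarymx -> \sum_j sqmod (A i j) = 1.
Proof.
move=> /unitarymxP AAt; apply: (@complexI R); rewrite rmorph_sum.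
have := congr1 (fun B : 'M[C]_m => B i i) AAt; rewrite !mxE eqxx /= => AAt_ii.
transitivity (\sum_j A i j * (A ^t*)%sesqui j i); last by rewrite AAt_ii.
by apply: eq_bigr => j _; rewrite !mxE sqmodE.
Qed.

Lemma unitarymx_col_sqmod m (A : 'M[C]_m) j :
  A \is unitarymx -> \sum_i sqmod (A i j) = 1.
Proof.
rewrite -trmxC_unitary => /(@unitarymx_row_sqmod _ _ j) <-.
by apply: eq_bigr => i _; rewrite !mxE sqmod_conj.
Qed.

End SquaredModulus.

Section TotalVariation.
Variables (R : realType) (n : nat).
Implicit Types (pi mu : 'I_n -> R) (eps : R).

Lemma mean_const T (c : R) : (0 < T)%N -> T%:R^-1 * \sum_(t < T) c = c.
Proof.
move=> T_gt0; rewrite sumr_const card_ord -[c *+ T]mulr_natr mulrCA.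
by rewrite mulVf ?mulr1 // pnatr_eq0 -lt0n.
Qed.

Lemma tvdC mu pi : tvd mu pi = tvd pi mu.
Proof. by apply: eq_bigr => w _; rewrite distrC. Qed.

Lemma tvd_avg d (f : 'I_d -> 'I_n -> R) pi eps : (0 < d)%N ->
  (forall a, tvd (f a) pi <= eps) ->
  tvd (fun w => d%:R^-1 * \sum_a f a w) pi <= eps.
Proof.
move=> d_gt0 f_close; have dinv_ge0 : 0 <= d%:R^-1 :> R by rewrite invr_ge0 ler0n.
have avg_sub w : d%:R^-1 * \sum_a f a w - pi w = d%:R^-1 * \sum_a (f a w - pi w).
  by rewrite sumrB mulrBr mean_const.
apply: (@le_trans _ _ (d%:R^-1 * \sum_a tvd (f a) pi)).
  rewrite /tvd exchange_big mulr_sumr; apply: ler_sum => w _.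
  rewrite avg_sub normrM ger0_norm // ler_wpM2l //; exact: ler_norm_sum.
rewrite -[leRHS](mean_const eps d_gt0); exact/ler_wpM2l/ler_sum.
Qed.

End TotalVariation.

Section KernelContraction.
Variables (R : realType) (n : nat).
Variables (K : 'I_n -> 'I_n -> R) (pi : 'I_n -> R) (eps : R).
Hypothesis K_row : forall u, \sum_w K u w = 1.

Lemma sum_kernel_step (mu : 'I_n -> R) :
  \sum_w \sum_u mu u * K u w = \sum_u mu u.
Proof.
by rewrite exchange_big; apply: eq_bigr => u _; rewrite -mulr_sumr K_row mulr1.
Qed.

Hypothesis pi_stationary : forall w, \sum_u pi u * K u w = pi w.
Hypothesis pi_sum : \sum_u pi u = 1.
Hypothesis K_close : forall u, tvd (K u) pi <= eps.

Lemma tvd_kernel_step (mu : 'I_n -> R) : \sum_u mu u = 1 ->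
  tvd (fun w => \sum_u mu u * K u w) pi <= eps * tvd mu pi.
Proof.
move=> mu_sum.
have step_sub w : \sum_u mu u * K u w - pi w
                  = \sum_u (mu u - pi u) * (K u w - pi w).
  have mass0 : \sum_u (mu u - pi u) = 0 by rewrite sumrB mu_sum pi_sum subrr.
  under [RHS]eq_bigr do rewrite mulrBr.
  rewrite sumrB -mulr_suml mass0 mul0r subr0.
  by under [RHS]eq_bigr do rewrite mulrBl; rewrite sumrB pi_stationary.
apply: (@le_trans _ _ (\sum_w \sum_u `|mu u - pi u| * `|K u w - pi w|)).
  apply: ler_sum => w _; rewrite step_sub.
  apply: le_trans (ler_norm_sum _ _ _) _.
  by apply: ler_sum => u _; rewrite normrM.
rewrite exchange_big /= /tvd mulr_sumr; apply: ler_sum => u _.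
rewrite -mulr_sumr mulrC; apply: ler_wpM2r => //; exact: K_close.
Qed.

End KernelContraction.

Section QuantumWalk.
Variables (R : realType) (d n : nat) (U : 'M[complex R]_(d * n)).
Hypothesis U_unitary : U \is unitarymx.

Lemma Upow_unitary t : Upow U t \is unitarymx.
Proof.
elim: t => [|t IH] /=; last exact: mul_unitarymx.
by apply/unitarymxP; rewrite trmx1 map_mx1 mul1mx.
Qed.

Lemma sum_qidx (f : 'I_(d * n) -> R) :
  \sum_i f i = \sum_a \sum_w f (qidx a w).
Proof.
rewrite (reindex _ (curry_mxvec_bij _ _)) /= pair_bigA /=.
by apply: eq_bigr => -[a w].
Qed.

Lemma sum_Pt_vertex t a v : \sum_w Pt U t a v w = 1.
Proof.
rewrite /Pt exchange_big -(sum_qidx (fun i => sqmod (Upow U t i (qidx a v)))).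
exact/unitarymx_col_sqmod/Upow_unitary.
Qed.

Lemma sum_Pt_basis t w : \sum_a \sum_v Pt U t a v w = d%:R.
Proof.
rewrite /Pt; under eq_bigr do rewrite exchange_big /=.
rewrite exchange_big /=.
transitivity (\sum_(a' < d) (1 : R)); last by rewrite sumr_const card_ord.
apply: eq_bigr => a' _.
rewrite -(sum_qidx (fun j => sqmod (Upow U t (qidx a' w) j))).
exact/unitarymx_row_sqmod/Upow_unitary.
Qed.

Lemma sum_Pbar_vertex T a v : (0 < T)%N -> \sum_w Pbar U T a v w = 1.
Proof.
move=> T_gt0; rewrite /Pbar -mulr_sumr exchange_big /=.
by under eq_bigr do rewrite sum_Pt_vertex; exact: mean_const.
Qed.

Lemma sum_Pbar_basis T w : (0 < T)%N -> \sum_a \sum_v Pbar U T a v w = d%:R.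
Proof.
move=> T_gt0; rewrite /Pbar.
under eq_bigr do rewrite -mulr_sumr exchange_big /=.
rewrite -mulr_sumr exchange_big /=.
by under eq_bigr do rewrite sum_Pt_basis; exact: mean_const.
Qed.

Lemma limit_uniform (pi : 'I_n -> R) : (0 < d)%N ->
  (forall a v w, (fun T : nat => Pbar U T a v w) @ \oo --> pi w) ->
  forall w, pi w = n%:R^-1.
Proof.
move=> d_gt0 Pbar_cvg w.
have n_gt0 : (0 < n)%N by apply: leq_ltn_trans (ltn_ord w).
have sum_cvg : (fun T : nat => \sum_a \sum_v Pbar U T a v w) @ \oo -->
               \sum_(a < d) \sum_(v < n) pi w.
  apply: (@cvg_big R _ +%R 0 xpredT add_continuous) => // a _.
  exact: (@cvg_big R _ +%R 0 xpredT add_continuous).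
have sum_cst : (fun T : nat => \sum_a \sum_v Pbar U T a v w) @ \oo --> (d%:R : R).
  by apply: cvg_near_cst; exists 1%N => // T /= /sum_Pbar_basis.
have : \sum_(a < d) \sum_(v < n) pi w = d%:R.
  by apply: (cvg_unique _ sum_cvg sum_cst); exact: norm_hausdorff.
rewrite !sumr_const !card_ord -mulrnA => dn_pi.
have dn_neq0 : (n * d)%:R != 0 :> R by rewrite pnatr_eq0 -lt0n muln_gt0 n_gt0 d_gt0.
apply: (mulfI dn_neq0); rewrite mulr_natl dn_pi natrM mulrAC mulfV ?mul1r //.
by rewrite pnatr_eq0 -lt0n.
Qed.

Lemma amp_stepE M u w :
  amp_step U M u w = d%:R^-1 * \sum_a Pbar U M a u w.
Proof.
rewrite /amp_step /Pbar mulr_sumr; apply: eq_bigr => a _.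
by rewrite !mulr_sumr; apply: eq_bigr => t _; rewrite mulrA.
Qed.

Lemma sum_amp_step_vertex M u : (0 < d)%N -> (0 < M)%N ->
  \sum_w amp_step U M u w = 1.
Proof.
move=> d_gt0 M_gt0; under eq_bigr do rewrite amp_stepE.
rewrite -mulr_sumr exchange_big /=.
by under eq_bigr do rewrite sum_Pbar_vertex //; exact: mean_const.
Qed.

Lemma sum_amp_step_start M w : (0 < d)%N -> (0 < M)%N ->
  \sum_u amp_step U M u w = 1.
Proof.
move=> d_gt0 M_gt0; under eq_bigr do rewrite amp_stepE.
by rewrite -mulr_sumr exchange_big sum_Pbar_basis // mulVf // pnatr_eq0 -lt0n.
Qed.

Lemma tvd_amp_step M (pi : 'I_n -> R) eps u : (0 < d)%N ->
  (forall a v, tvd pi (Pbar U M a v) <= eps) ->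
  tvd (amp_step U M u) pi <= eps.
Proof.
move=> d_gt0 Pbar_close.
have -> : amp_step U M u = fun w => d%:R^-1 * \sum_a Pbar U M a u w.
  by apply: funext => w; exact: amp_stepE.
by apply: tvd_avg => // a; rewrite tvdC.
Qed.

Lemma amp_dist1 M v0 : amp_dist U M v0 1 = amp_step U M v0.
Proof.
apply: funext => w /=; rewrite (bigD1 v0) //= eqxx mul1r big1 ?addr0 //.
by move=> u /negbTE ->; rewrite mul0r.
Qed.

Lemma sum_amp_dist M v0 k : (0 < d)%N -> (0 < M)%N ->
  \sum_w amp_dist U M v0 k w = 1.
Proof.
move=> d_gt0 M_gt0; elim: k => [|k IH] /=.
  by rewrite (bigD1 v0) //= eqxx big1 ?addr0 // => w /negbTE ->.
by rewrite sum_kernel_step // => u; exact: sum_amp_step_vertex.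
Qed.

End QuantumWalk.

Theorem mainTheorem10 (R : realType) (d n : nat) (e : rel 'I_n)
  (U : 'M[complex R]_(d * n)) (pi : 'I_n -> R) (eps : R) (M : nat)
  (v0 : 'I_n) (k : nat) :
  (0 < d)%N ->
  simple_graph e ->
  general_quantum_walk e U ->
  (forall (a : 'I_d) (v w : 'I_n),
      (fun T : nat => Pbar U T a v w) @ \oo --> pi w) ->
  0 < eps ->
  is_mixing_time U pi eps M ->
  (1 <= k)%N ->
  tvd (amp_dist U M v0 k) pi <= eps ^+ k.
Proof.
move=> d_gt0 _ [U_unitary _] Pbar_cvg eps_gt0 [M_gt0 [mixed _]] k_gt0.
have pi_uniform := limit_uniform U_unitary d_gt0 Pbar_cvg.
have pi_stationary w : \sum_u pi u * amp_step U M u w = pi w.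
  under eq_bigr do rewrite pi_uniform.
  by rewrite -mulr_sumr sum_amp_step_start // mulr1 pi_uniform.
have pi_sum : \sum_u pi u = 1.
  under eq_bigr do rewrite pi_uniform -[n%:R^-1]mulr1.
  by rewrite -mulr_sumr mean_const // (leq_ltn_trans _ (ltn_ord v0)).
have K_close u := tvd_amp_step u d_gt0 (mixed M (leqnn M)).
case: k k_gt0 => // k _; elim: k => [|k IH]; first by rewrite amp_dist1 expr1.
have mass1 := sum_amp_dist U_unitary v0 k.+1 d_gt0 M_gt0.
have step := tvd_kernel_step pi_stationary pi_sum K_close mass1.
rewrite exprS; apply: (le_trans step).
by rewrite ler_wpM2l // ltW.
Qed.
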